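(* Let $a,a^\dagger$ be the annihilation and creation operators of the harmonic oscillator Fock space, with $[a,a^\dagger]=1$, vacuum $|0\rangle$ satisfying $a|0\rangle=0$, $\langle 0|a^\dagger=0$, $\langle0|0\rangle=1$. For a complex number $s$ with $\mathrm{Re}(s)>1$, $$\zeta(s)=\langle 0|\,\frac{a}{1-a}\,(a^\dagger a)^{-s}\,(e^{a^\dagger}-1)\,|0\rangle,$$ where $\zeta(s)=\sum_{n\ge1}n^{-s}$ is the Riemann zeta function, $\frac{a}{1-a}:=\sum_{\ell\ge1}a^\ell$ and $e^{a^\dagger}-1:=\sum_{m\ge1}\frac{1}{m!}(a^\dagger)^m$ are formal series, and the expression is evaluated termwise.
   Context: The number states $|n\rangle:=(a^\dagger)^n|0\rangle/\sqrt{n!}$, $\langle n|:=\langle0|a^n/\sqrt{n!}$ satisfy $\langle m|n\rangle=\delta_{mn}$, and $a^\dagger a|n\rangle=n|n\rangle$. The operator $(a^\dagger a)^{-s}$ is defined on states $|n\rangle$ with $n\ge1$ by $(a^\dagger a)^{-s}|n\rangle=n^{-s}|n\rangle$. *)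

From Stdlib Require Import Reals Lra Factorial.
From Coquelicot Require Import Coquelicot.
Open Scope R_scope.

(* n^{-s} := exp(-s ln n) for a natural number n >= 1 and complex s. *)
Definition cpow_neg (n : nat) (s : C) : C :=
  (Rpower (INR n) (- Re s) * cos (- Im s * ln (INR n)),
   Rpower (INR n) (- Re s) * sin (- Im s * ln (INR n))).

Definition zeta_term (s : C) (n : nat) : C := cpow_neg (S n) s.
Definition zeta_value (s Z : C) : Prop := is_series (zeta_term s) Z.

(* Fock space in the number basis: a state is its sequence of coefficients
   psi n = <n|psi>. *)
Definition state := nat -> C.

Definition vac : state := fun n => match n with O => RtoC 1 | S _ => RtoC 0 end.

(* annihilation a|n> = sqrt n |n-1>, i.e. (a psi)_n = sqrt(n+1) psi_(n+1) *)
Definition ann (psi : state) : state :=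
  fun n => Cmult (RtoC (sqrt (INR (S n)))) (psi (S n)).

(* creation a^dag|n> = sqrt(n+1) |n+1>, i.e. (a^dag psi)_n = sqrt n psi_(n-1) *)
Definition cre (psi : state) : state :=
  fun n => match n with
           | O => RtoC 0
           | S k => Cmult (RtoC (sqrt (INR n))) (psi k)
           end.

(* (a^dag a)^{-s}: multiplies the |n> component by n^{-s}, for n >= 1.
   It is undefined on |0> in the paper; we set the |0> component to 0
   (it is never used: (a^dag)^m |0> with m >= 1 has no |0> component). *)
Definition numinvpow (s : C) (psi : state) : state :=
  fun n => match n with
           | O => RtoC 0
           | S _ => Cmult (cpow_neg n s) (psi n)
           end.

Definition bra0 (psi : state) : C := psi O.

(* the (l,m) term of  <0| (sum_{l>=1} a^l) (a^dag a)^{-s} (sum_{m>=1} (a^dag)^m / m!) |0>,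
   indexed by l, m >= 1 *)
Definition fock_term (s : C) (l m : nat) : C :=
  Cmult (RtoC (/ INR (fact m)))
        (bra0 (Nat.iter l ann (numinvpow s (Nat.iter m cre vac)))).

(* Only the diagonal survives: a^(l+1) (a^dag a)^(-s) (a^dag)^(m+1)/(m+1)! |0> has a vacuum
   component only when l = m, and then the factorial normalisations cancel to exactly
   (m+1)^(-s).  So each inner series has a single non-zero term, the outer series is the
   Dirichlet series of zeta, and that converges absolutely for Re s > 1 by comparison of
   sum n^(-sigma) with the telescoping sum of (n^(1-sigma) - (n+1)^(1-sigma))/(sigma-1). *)

From Stdlib Require Import Reals Lra Lia Factorial.
From Coquelicot Require Import Coquelicot.
Open Scope R_scope.

Lemma Rpower_1_l (y : R) : Rpower 1 y = 1.
Proof. unfold Rpower. rewrite ln_1, Rmult_0_r. apply exp_0. Qed.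

Lemma Rpower_opp_antitone (a b sg : R) :
  0 < a <= b -> 0 <= sg -> Rpower b (- sg) <= Rpower a (- sg).
Proof.
  intros Hab Hsg. rewrite !Rpower_Ropp.
  apply Rinv_le_contravar; [apply exp_pos | exact (Rle_Rpower_l _ _ _ Hsg Hab)].
Qed.

(* Mean value theorem for t |-> t^(1-sg) on [x, x+1], with the derivative bounded below at x+1. *)
Lemma Rpower_succ_le_diff (sg x : R) : 1 < sg -> 1 <= x ->
  Rpower (x + 1) (- sg) * (sg - 1) <= Rpower x (1 - sg) - Rpower (x + 1) (1 - sg).
Proof.
  intros Hsg Hx.
  destruct (MVT_gen (fun t => Rpower t (1 - sg)) x (x + 1)
              (fun t => (1 - sg) * Rpower t (- sg))) as [c [Hc Heq]].
  - intros t Ht. rewrite Rmin_left, Rmax_right in Ht by lra.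
    apply is_derive_Reals.
    replace (- sg) with (1 - sg - 1) by ring.
    apply derivable_pt_lim_power. lra.
  - intros t Ht. rewrite Rmin_left, Rmax_right in Ht by lra.
    apply derivable_continuous_pt. exists ((1 - sg) * Rpower t (1 - sg - 1)).
    apply derivable_pt_lim_power. lra.
  - rewrite Rmin_left, Rmax_right in Hc by lra.
    assert (Hmono : Rpower (x + 1) (- sg) <= Rpower c (- sg))
      by (apply Rpower_opp_antitone; lra).
    simpl in Heq. nra.
Qed.

Lemma sum_Rpower_opp_le (sg : R) (N : nat) : 1 < sg ->
  sum_n (fun n => Rpower (INR (S n)) (- sg)) N
  <= 1 + (1 - Rpower (INR (S N)) (1 - sg)) / (sg - 1).
Proof.
  intros Hsg. induction N as [|N IH].
  - rewrite sum_O. simpl. rewrite !Rpower_1_l. unfold Rdiv. lra.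
  - rewrite sum_Sn. change plus with Rplus.
    assert (HN : 1 <= INR (S N)) by (rewrite S_INR; pose proof (pos_INR N); lra).
    assert (Hstep := Rpower_succ_le_diff sg (INR (S N)) Hsg HN).
    rewrite <- S_INR in Hstep.
    assert (Hterm : Rpower (INR (S (S N))) (- sg) <=
       (Rpower (INR (S N)) (1 - sg) - Rpower (INR (S (S N))) (1 - sg)) / (sg - 1)).
    { apply (Rmult_le_reg_r (sg - 1)); [lra|]. unfold Rdiv.
      rewrite Rmult_assoc, Rinv_l, Rmult_1_r by lra. exact Hstep. }
    replace ((1 - Rpower (INR (S (S N))) (1 - sg)) / (sg - 1)) with
      ((1 - Rpower (INR (S N)) (1 - sg)) / (sg - 1) +
       (Rpower (INR (S N)) (1 - sg) - Rpower (INR (S (S N))) (1 - sg)) / (sg - 1))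
      by (field; lra).
    lra.
Qed.

Lemma ex_series_Rpower_opp (sg : R) : 1 < sg ->
  ex_series (fun n => Rpower (INR (S n)) (- sg)).
Proof.
  intros Hsg.
  apply (ex_finite_lim_seq_incr _ (1 + 1 / (sg - 1))).
  - intros n. rewrite sum_Sn. change plus with Rplus.
    pose proof (exp_pos (- sg * ln (INR (S (S n))))). unfold Rpower. lra.
  - intros n. eapply Rle_trans; [exact (sum_Rpower_opp_le sg n Hsg)|].
    assert (0 < Rpower (INR (S n)) (1 - sg)) by apply exp_pos.
    assert (0 < / (sg - 1)) by (apply Rinv_0_lt_compat; lra).
    unfold Rdiv. nra.
Qed.

Lemma Cmod_cpow_neg (n : nat) (s : C) : Cmod (cpow_neg n s) = Rpower (INR n) (- Re s).
Proof.
  unfold cpow_neg, Cmod; simpl fst; simpl snd.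
  set (r := Rpower (INR n) (- Re s)); set (t := - Im s * ln (INR n)).
  replace ((r * cos t) ^ 2 + (r * sin t) ^ 2) with (r ^ 2 * (Rsqr (sin t) + Rsqr (cos t)))
    by (unfold Rsqr; ring).
  rewrite sin2_cos2, Rmult_1_r.
  apply sqrt_pow2. left; apply exp_pos.
Qed.

Lemma ex_zeta_value (s : C) : 1 < Re s -> exists Z : C, zeta_value s Z.
Proof.
  intros Hs.
  apply (@ex_series_le C_AbsRing C_CompleteNormedModule _
           (fun n => Rpower (INR (S n)) (- Re s))).
  - intros n. exact (Req_le _ _ (Cmod_cpow_neg (S n) s)).
  - exact (ex_series_Rpower_opp _ Hs).
Qed.

Lemma cre_iter_vac (m n : nat) :
  Nat.iter m cre vac n = if Nat.eqb n m then RtoC (sqrt (INR (fact m))) else RtoC 0.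
Proof.
  revert n; induction m as [|m IH]; intros [|n].
  - simpl. rewrite sqrt_1. reflexivity.
  - reflexivity.
  - reflexivity.
  - change (Nat.iter (S m) cre vac (S n)) with
      (Cmult (RtoC (sqrt (INR (S n)))) (Nat.iter m cre vac n)).
    rewrite IH. simpl Nat.eqb. destruct (Nat.eqb_spec n m) as [->|_].
    + rewrite <- RtoC_mult, <- sqrt_mult, <- mult_INR by apply pos_INR. reflexivity.
    + apply Cmult_0_r.
Qed.

(* The weight sqrt(n!) turns the sqrt factors of a into a telescoping product. *)
Lemma ann_iter (l n : nat) (phi : state) :
  Cmult (Nat.iter l ann phi n) (RtoC (sqrt (INR (fact n)))) =
  Cmult (RtoC (sqrt (INR (fact (n + l))))) (phi (n + l)%nat).
Proof.
  revert n; induction l as [|l IH]; intros n.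
  - rewrite Nat.add_0_r. apply Cmult_comm.
  - change (Nat.iter (S l) ann phi n) with
      (Cmult (RtoC (sqrt (INR (S n)))) (Nat.iter l ann phi (S n))).
    replace (n + S l)%nat with (S n + l)%nat by lia.
    rewrite <- IH, (Cmult_comm (RtoC (sqrt (INR (S n))))), <- Cmult_assoc.
    f_equal.
    rewrite <- RtoC_mult, <- sqrt_mult, <- mult_INR by apply pos_INR. reflexivity.
Qed.

Lemma bra0_ann_iter (l : nat) (phi : state) :
  bra0 (Nat.iter l ann phi) = Cmult (RtoC (sqrt (INR (fact l)))) (phi l).
Proof.
  unfold bra0. rewrite <- (Cmult_1_r (Nat.iter l ann phi 0%nat)).
  replace (RtoC 1) with (RtoC (sqrt (INR (fact 0)))) by (simpl; rewrite sqrt_1; reflexivity).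
  exact (ann_iter l 0%nat phi).
Qed.

Lemma fock_term_eq (s : C) (l m : nat) :
  fock_term s (S l) (S m) = if Nat.eqb l m then zeta_term s l else RtoC 0.
Proof.
  unfold fock_term. rewrite bra0_ann_iter. unfold numinvpow. rewrite cre_iter_vac.
  simpl Nat.eqb. destruct (Nat.eqb_spec l m) as [->|_].
  - unfold zeta_term.
    assert (Hfact : 0 < INR (fact (S m))) by apply lt_0_INR, lt_O_fact.
    rewrite (Cmult_comm (cpow_neg _ _)), !Cmult_assoc, <- !RtoC_mult.
    replace (/ INR (fact (S m)) * sqrt (INR (fact (S m))) * sqrt (INR (fact (S m)))) with 1.
    + apply Cmult_1_l.
    + rewrite Rmult_assoc, sqrt_sqrt by lra. field. lra.
  - rewrite !Cmult_0_r. reflexivity.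
Qed.

Lemma sum_n_delta {G : AbelianMonoid} (l N : nat) (c : G) :
  sum_n (fun m => if Nat.eqb l m then c else zero) N = if Nat.leb l N then c else zero.
Proof.
  induction N as [|N IH].
  - rewrite sum_O. destruct l; reflexivity.
  - rewrite sum_Sn, IH.
    destruct (Nat.eqb_spec l (S N)) as [->|Hne].
    + rewrite (proj2 (Nat.leb_gt (S N) N)), Nat.leb_refl by lia. apply plus_zero_l.
    + rewrite plus_zero_r.
      destruct (Nat.leb_spec l N), (Nat.leb_spec l (S N)); reflexivity || lia.
Qed.

Lemma is_series_delta {K : AbsRing} {V : NormedModule K} (l : nat) (c : V) :
  is_series (fun m => if Nat.eqb l m then c else zero) c.
Proof.
  unfold is_series.
  apply filterlim_ext_loc with (fun _ => c); [|apply filterlim_const].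
  exists l. intros N HN. rewrite sum_n_delta.
  rewrite (proj2 (Nat.leb_le l N) HN). reflexivity.
Qed.

Theorem mainTheorem2 (s : C) (hs : 1 < Re s) :
  exists Z : C, zeta_value s Z /\
  exists inner : nat -> C,
    (forall l : nat, is_series (fun m : nat => fock_term s (S l) (S m)) (inner l)) /\
    is_series inner Z.
Proof.
  destruct (ex_zeta_value s hs) as [Z HZ].
  exists Z. split; [exact HZ|].
  exists (zeta_term s). split; [|exact HZ].
  intros l. apply (is_series_ext (fun m => if Nat.eqb l m then zeta_term s l else zero)).
  - intros m. symmetry. apply fock_term_eq.
  - apply is_series_delta.
Qed.
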